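(* Let $X$ be well ordered, $\Omega=\{D\}$ with $D$ unary, $\lambda\in K$, and order $\mathfrak{S}(X)$ by order $(2)$. Then $$S=\{D(xy)-D(x)y-xD(y)-\lambda D(x)D(y)\mid x,y\in\mathfrak{S}(X)\}$$ is a Gröbner–Shirshov basis in $K\langle X;D\rangle$.
   Context: General setup (here $\Omega=\{D\}$). $K$ is a commutative ring with unit; $S(Y)$ is the free semigroup on $Y$. $\mathfrak{S}_0=S(X)$, $\mathfrak{S}_n=S(X\cup\{D(u)\mid u\in\mathfrak{S}_{n-1}\})$, $\mathfrak{S}(X)=\bigcup_n\mathfrak{S}_n$; $K\langle X;D\rangle$ is the free $K$-module on $\mathfrak{S}(X)$ with concatenation product and $D$ extended linearly. Prime words are elements of $X\cup\{D(u)\}$; $bre(u)$ is the number of prime factors. $\mathfrak{S}^\star(X)$: words on $X\cup\{\star\}$ with exactly one $\star$; $u|_s$: substitution. Monomial ordering: well order with $w>v\Rightarrow u|_w>u|_v$. $\bar f$ = leading word, monic = leading coefficient $1$. Compositions of monic $f,g$: intersection $(f,g)_w=fa-bg$ when $w=\bar fa=b\bar g$, $a,b\in\mathfrak{S}(X)$, $bre(w)<bre(\bar f)+bre(\bar g)$; including $(f,g)_w=f-u|_g$ when $w=\bar f=u|_{\bar g}$, $u\in\mathfrak{S}^\star(X)$. $p\equiv q\ \mathrm{mod}(S,w)$ means $p-q=\sum\alpha_iu_i|_{s_i}$, $s_i\in S$, $u_i|_{\overline{s_i}}<w$. $S$ is a Gröbner–Shirshov basis if all its compositions are $\equiv0\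 \mathrm{mod}(S,w)$. Order (2): each $u\in\mathfrak{S}(X)$ is uniquely $u=u_1\cdots u_n$ with $u_i\in X\cup D(\mathfrak{S}(X))$; $deg_X(u)$ is the number of occurrences of letters of $X$ in $u$; $wt(u)=(deg_X(u),u_1,\dots,u_n)$, and $u>v$ iff $wt(u)>wt(v)$ lexicographically, where prime words are compared by: for $x,y\in X$, $x>y$ per the order on $X$; $D(u')>x$ for all $x\in X$; $D(u')>D(v')$ iff $u'>v'$. *)

From HB Require Import structures.
From mathcomp Require Import all_boot all_order all_algebra.
From Stdlib Require List.
Set Implicit Arguments. Unset Strict Implicit. Unset Printing Implicit Defensive.
Import Order.TTheory GRing.Theory.
Local Open Scope ring_scope.

(* Free operated semigroup S(X) with one unary operator D.             *)
(* A prime word is a letter x in X or D(u) with u a (nonempty) word;  *)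
(* D(u) with u = p1 p2 ... pn is represented as  PD p1 [:: p2;..;pn]. *)
(* A word is a nonempty sequence of prime words: (head, tail).        *)
Section Words.
Context {disp : Order.disp_t} (X : orderType disp).

Inductive prim : Type :=
| PX of X
| PD of prim & seq prim.

Definition word : Type := (prim * seq prim)%type.

Fixpoint prim_enc (p : prim) : GenTree.tree X :=
  match p with
  | PX x => GenTree.Leaf x
  | PD q qs => GenTree.Node 0 (prim_enc q :: map prim_enc qs)
  end.

Fixpoint prim_dec (t : GenTree.tree X) : option prim :=
  match t with
  | GenTree.Leaf x => Some (PX x)
  | GenTree.Node _ ts =>
      match ts with
      | [::] => None
      | t0 :: ts' =>
          match prim_dec t0 with
          | Some q => Some (PD q (pmap prim_dec ts'))
          | None => None
          end
      end
  end.

Lemma prim_encK_aux (p : prim) : prim_dec (prim_enc p) = Some p.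
Proof.
revert p; fix IH 1; intros [x|q qs]; simpl; [reflexivity|].
rewrite IH; f_equal; f_equal.
induction qs as [|q' qs' IHqs]; simpl; [reflexivity|].
by rewrite IH IHqs.
Qed.

Lemma prim_encK : pcancel prim_enc prim_dec.
Proof. exact: prim_encK_aux. Qed.

HB.instance Definition _ := Equality.copy prim (pcan_type prim_encK).

Definition wseq (w : word) : seq prim := w.1 :: w.2.
Definition bre (w : word) : nat := size (wseq w).

Definition wcat (u v : word) : word := (u.1, u.2 ++ v.1 :: v.2).

Definition Dp (u : word) : prim := PD u.1 u.2.
Definition Dw (u : word) : word := (Dp u, [::]).
Definition Xw (x : X) : word := (PX x, [::]).

Fixpoint degp (p : prim) : nat :=
  match p with
  | PX _ => 1
  | PD q qs => degp q + sumn (map degp qs)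
  end.
Definition degw (w : word) : nat := sumn (map degp (wseq w)).

(* Order (2).  ltp p q means p < q on prime words:
   x < y as in X;  x < D(u');  D(u') < D(v') iff u' < v', where
   u' < v' iff wt(u') < wt(v') lexicographically,
   wt(u) = (deg_X u, u_1, ..., u_n). *)
Fixpoint ltp (p q : prim) {struct p} : bool :=
  match p, q with
  | PX x, PX y => (x < y)%O
  | PX _, PD _ _ => true
  | PD _ _, PX _ => false
  | PD a as_, PD b bs =>
      let da := degp a + sumn (map degp as_) in
      let db := degp b + sumn (map degp bs) in
      (da < db)%N ||
      ((da == db) &&
       (ltp a b ||
        ((a == b) &&
         (fix lex (s t : seq prim) {struct s} : bool :=
            match s, t with
            | p' :: s', q' :: t' => ltp p' q' || ((p' == q') && lex s' t')
            | [::], _ :: _ => true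
            | _, _ => false
            end) as_ bs)))
  end.

Definition wlt (u v : word) : bool := ltp (Dp u) (Dp v).

(* S^star(X): words on X u {star} with exactly one star.
   CStar l r  is  l star r ;  CD l c r  is  l D(c) r  (l, r sequences of
   prime words, possibly empty). *)
Inductive ctx : Type :=
| CStar of seq prim & seq prim
| CD of seq prim & ctx & seq prim.

Definition wmk (l : seq prim) (w : word) (r : seq prim) : word :=
  match l with
  | [::] => (w.1, w.2 ++ r)
  | q :: l' => (q, l' ++ w.1 :: w.2 ++ r)
  end.

Fixpoint subst (u : ctx) (w : word) : word :=
  match u with
  | CStar l r => wmk l w r
  | CD l c r => wmk l (Dw (subst c w)) r
  end.

End Words.

(* The free K-module K<X;D> on S(X): an element is represented by a   *)
(* formal finite sum  [:: (a1,w1); ...; (an,wn)]  = sum a_i w_i, and  *)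
(* two representations denote the same element iff they have the same *)
(* coefficient function (peq).                                         *)
Section Polys.
Context {disp : Order.disp_t} (X : orderType disp) (K : comNzRingType).

Definition poly : Type := seq (K * word X).

Definition coef (f : poly) (w : word X) : K := \sum_(t <- f | t.2 == w) t.1.

Definition peq (f g : poly) : Prop := forall w, coef f w = coef g w.

Definition pmono (w : word X) : poly := [:: (1, w)].
Definition padd (f g : poly) : poly := f ++ g.
Definition pscale (a : K) (f : poly) : poly := [seq (a * t.1, t.2) | t <- f].
Definition psub (f g : poly) : poly := f ++ pscale (-1) g.
Definition pzero : poly := [::].
Definition pmul (f g : poly) : poly :=
  [seq (t.1 * s.1, wcat t.2 s.2) | t <- f, s <- g].
Definition pD (f : poly) : poly := [seq (t.1, Dw t.2) | t <- f].
Definition psubst (u : ctx X) (f : poly) : poly :=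
  [seq (t.1, subst u t.2) | t <- f].

Definition is_lead (f : poly) (w : word X) : Prop :=
  coef f w != 0 /\ forall v, coef f v != 0 -> v != w -> wlt v w.

Definition monic_with (f : poly) (w : word X) : Prop :=
  is_lead f w /\ coef f w = 1.

Definition cong_mod (S : poly -> Prop) (w : word X) (p q : poly) : Prop :=
  exists l : seq (K * ctx X * poly),
    (forall t, List.In t l ->
       S t.2 /\ exists sb, is_lead t.2 sb /\ wlt (subst t.1.2 sb) w) /\
    peq (psub p q) (flatten [seq pscale t.1.1 (psubst t.1.2 t.2) | t <- l]).

Definition GSbasis (S : poly -> Prop) : Prop :=
  (forall s, S s -> exists sb, monic_with s sb) /\
  (forall f g fb gb, S f -> S g -> monic_with f fb -> monic_with g gb ->
     (forall (a b w : word X), w = wcat fb a -> w = wcat b gb ->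
        (bre w < bre fb + bre gb)%N ->
        cong_mod S w (psub (pmul f (pmono a)) (pmul (pmono b) g)) pzero) /\
     (forall u : ctx X, fb = subst u gb ->
        cong_mod S fb (psub f (psubst u g)) pzero)).

Definition Sgen (lam : K) (x y : word X) : poly :=
  [:: (1, Dw (wcat x y)); (-1, wcat (Dw x) y); (-1, wcat x (Dw y));
      (- lam, wcat (Dw x) (Dw y))].

Definition S_diff (lam : K) (p : poly) : Prop :=
  exists x y : word X, peq p (Sgen lam x y).

End Polys.

From Pilot Require Import Defs.
From HB Require Import structures.
From mathcomp Require Import all_boot all_order all_algebra ring.
From Stdlib Require Import Classical.
Set Implicit Arguments. Unset Strict Implicit. Unset Printing Implicit Defensive.
Import Order.TTheory GRing.Theory.

(* Call v "descending" to w when deg_X v = deg_X w and the prime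
      factor sequences of v and w first differ at a position where v is
      smaller.  Descent implies v < w, and it is preserved by every context
      u|_-.  The three lower words of s(x,y) descend to D(xy), so D(xy) is the
      leading word of s(x,y) and s(x,y) is monic.
   2. Compositions.  All leading words D(xy) are prime, so there is no
      intersection composition (bre would have to be < 2).  An inclusion
      D(xy) = u|_{D(x'y')} either has u trivial with xy = x'y' (an overlap
      of the two factorisations), or D(x'y') occurs strictly inside x or y.
      In each case the composition is written explicitly as a combination
      of elements of S in contexts, all of whose leading words lie below
      D(xy) by step 1; the coefficient identity is checked by 'ring'. *)

Section Words.
Context {disp : Order.disp_t} (X : orderType disp).
Local Notation prim := (prim X).
Local Notation word := (word X).
Local Notation degp := (@degp _ X).

Fixpoint lexs (s t : seq prim) : bool :=
  match s, t with
  | p :: s', q :: t' => ltp p q || ((p == q) && lexs s' t')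
  | [::], _ :: _ => true
  | _, _ => false
  end.

Lemma ltpD (a : prim) as_ b bs : ltp (PD a as_) (PD b bs) =
  ((degp a + sumn (map degp as_) < degp b + sumn (map degp bs))%N ||
  ((degp a + sumn (map degp as_) == degp b + sumn (map degp bs)) &&
   (ltp a b || ((a == b) && lexs as_ bs)))).
Proof. by []. Qed.

Lemma ltpp : forall p : prim, ltp p p = false.
Proof.
fix IH 1; case=> [x|a as_]; first by rewrite /= ltxx.
rewrite ltpD ltnn eqxx /= IH eqxx /=.
by elim: as_ => [|q qs IHq] //=; rewrite IH eqxx.
Qed.

Lemma wlt_neq (v w : word) : wlt v w -> v != w.
Proof. by apply: contraTneq => ->; rewrite /wlt ltpp. Qed.

Lemma degp_gt0 : forall p : prim, (0 < degp p)%N.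
Proof. by fix IH 1; case=> [x|a as_] //=; apply: ltn_addr. Qed.

Lemma degw_gt0 (w : word) : (0 < degw w)%N.
Proof. exact: ltn_addr (degp_gt0 _). Qed.

Lemma wseq_inj : injective (@wseq _ X).
Proof. by case=> a b [c d] [-> ->]. Qed.

Lemma Dw_inj : injective (@Dw _ X).
Proof. by case=> a b [c d] [-> ->]. Qed.

Lemma wseq_wcat (x y : word) : wseq (wcat x y) = wseq x ++ wseq y.
Proof. by []. Qed.

Lemma wseq_wmk l (w : word) r : wseq (wmk l w r) = l ++ wseq w ++ r.
Proof. by case: l. Qed.

Lemma wcatA (x y z : word) : wcat x (wcat y z) = wcat (wcat x y) z.
Proof. by apply: wseq_inj; rewrite !wseq_wcat catA. Qed.

Lemma degw_split (w : word) : degp w.1 + sumn (map degp w.2) = degw w.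
Proof. by []. Qed.

Lemma degw_cat (x y : word) : degw (wcat x y) = degw x + degw y.
Proof. by rewrite /degw wseq_wcat map_cat sumn_cat. Qed.

Lemma degw_Dw (u : word) : degw (Dw u) = degw u.
Proof. by rewrite /degw /= addn0. Qed.

Lemma degw_lt_cat (x y : word) : (degw x < degw (wcat x y))%N.
Proof. by rewrite degw_cat -ltn_subLR ?subnn ?degw_gt0. Qed.

Lemma degp_head_le (x : word) : (degp x.1 <= degw x)%N.
Proof. exact: leq_addr. Qed.

Lemma ltp_Dp_deg (p : prim) (u : word) : (degp p < degw u)%N -> ltp p (Dp u).
Proof. by case: p => [x|a as_] // H; rewrite /Dp ltpD H. Qed.

Definition descends (v w : word) : Prop :=
  degw v = degw w /\ exists pre p q s t,
    wseq v = pre ++ p :: s /\ wseq w = pre ++ q :: t /\ ltp p q.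

Lemma descends_wlt (v w : word) : descends v w -> wlt v w.
Proof.
case=> E [pre [p [q [s [t [Hv [Hw Hpq]]]]]]].
rewrite /wlt /Dp ltpD !degw_split E ltnn eqxx /=.
change (lexs (wseq v) (wseq w)); rewrite Hv Hw.
by elim: pre {Hv Hw} => /= [|r pre ->]; rewrite ?Hpq ?ltpp ?eqxx ?orbT.
Qed.

(* Descent is compatible with multiplication on both sides and with D,
   hence with every context: this is the monomial-order property. *)
Lemma descends_wmk l (v w : word) r : descends v w -> descends (wmk l v r) (wmk l w r).
Proof.
case=> E [pre [p [q [s [t [Hv [Hw H]]]]]]]; split.
  by rewrite /degw !wseq_wmk !map_cat !sumn_cat -!/(degw _) E.
exists (l ++ pre), p, q, (s ++ r), (t ++ r).
by rewrite !wseq_wmk Hv Hw -!catA.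
Qed.

Lemma descends_Dw (v w : word) : descends v w -> descends (Dw v) (Dw w).
Proof.
move=> H; split; first by rewrite !degw_Dw; case: H.
by exists [::], (Dp v), (Dp w), [::], [::]; do 2 split=> //; apply: descends_wlt.
Qed.

Lemma descends_subst (c : ctx X) (v w : word) :
  descends v w -> descends (subst c v) (subst c w).
Proof.
elim: c => [l r | l c IH r] /= H; apply: descends_wmk => //.
exact: descends_Dw (IH H).
Qed.

Lemma descends_Dx_y (x y : word) : descends (wcat (Dw x) y) (Dw (wcat x y)).
Proof.
split; first by rewrite !degw_cat !degw_Dw degw_cat.
exists [::], (Dp x), (Dp (wcat x y)), (wseq y), [::]; do 2 split=> //.
exact/ltp_Dp_deg/degw_lt_cat.
Qed.

Lemma descends_x_Dy (x y : word) : descends (wcat x (Dw y)) (Dw (wcat x y)).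
Proof.
split; first by rewrite !degw_cat !degw_Dw degw_cat.
exists [::], x.1, (Dp (wcat x y)), (x.2 ++ [:: Dp y]), [::]; do 2 split=> //.
exact/ltp_Dp_deg/(leq_ltn_trans (degp_head_le x))/degw_lt_cat.
Qed.

Lemma descends_Dx_Dy (x y : word) : descends (wcat (Dw x) (Dw y)) (Dw (wcat x y)).
Proof.
split; first by rewrite !degw_cat !degw_Dw degw_cat.
exists [::], (Dp x), (Dp (wcat x y)), [:: Dp y], [::]; do 2 split=> //.
exact/ltp_Dp_deg/degw_lt_cat.
Qed.

Lemma Dw_not_below (v z : word) : degw v = degw z -> (degp v.1 < degw z)%N ->
  ~~ wlt (Dw z) v.
Proof.
move=> E H; rewrite /wlt /Dp ltpD !degw_split degw_Dw E ltnn eqxx orFb andTb.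
have -> : (PD z.1 z.2 == v.1) = false.
  by apply/negbTE; apply: contraTneq H => <-; rewrite ltnn.
case: v.1 H => [x|a as_] H //.
rewrite ltpD degw_split.
have -> : degp a + sumn (map degp as_) = degp (PD a as_) by [].
by rewrite ltnNge ltnW //= gtn_eqF.
Qed.

End Words.

Section Contexts.
Context {disp : Order.disp_t} (X : orderType disp).
Local Notation prim := (prim X).
Local Notation word := (word X).
Local Notation ctx := (ctx X).

(* Every context is  L (inner) R  with inner either the hole or D(c|_-). *)
Definition cL (c : ctx) : seq prim := match c with CStar l _ | CD l _ _ => l end.
Definition cR (c : ctx) : seq prim := match c with CStar _ r | CD _ _ r => r end.
Definition inner (c : ctx) (w : word) : word :=
  match c with CStar _ _ => w | CD _ c' _ => Dw (subst c' w) end.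
Definition cset (c : ctx) l r : ctx :=
  match c with CStar _ _ => CStar l r | CD _ c' _ => CD l c' r end.

Lemma subst_inner (c : ctx) w : subst c w = wmk (cL c) (inner c w) (cR c).
Proof. by case: c. Qed.

Lemma subst_cset (c : ctx) l r w : subst (cset c l r) w = wmk l (inner c w) r.
Proof. by case: c. Qed.

Definition cI : ctx := CStar [::] [::].
Definition cD (c : ctx) : ctx := CD [::] c [::].
Definition cl (x : word) (c : ctx) : ctx := cset c (wseq x ++ cL c) (cR c).
Definition cr (c : ctx) (y : word) : ctx := cset c (cL c) (cR c ++ wseq y).

Lemma subst_cI (w : word) : subst cI w = w.
Proof. by case: w => a b /=; rewrite cats0. Qed.

Lemma subst_cD c (w : word) : subst (cD c) w = Dw (subst c w).
Proof. by []. Qed.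

Lemma subst_cl x c (w : word) : subst (cl x c) w = wcat x (subst c w).
Proof. by apply: wseq_inj; rewrite /cl subst_cset (subst_inner c) wseq_wcat !wseq_wmk -catA. Qed.

Lemma subst_cr c y (w : word) : subst (cr c y) w = wcat (subst c w) y.
Proof. by apply: wseq_inj; rewrite /cr subst_cset (subst_inner c) wseq_wcat !wseq_wmk -!catA. Qed.

Lemma wmk_inj l r : injective (fun w : word => wmk l w r).
Proof.
move=> v w /(congr1 (@wseq _ X)); rewrite !wseq_wmk => E.
have Hs : size (wseq v) = size (wseq w).
  by move/(congr1 size): E; rewrite !size_cat => /addnI /addIn.
move/eqP: E; rewrite eqseq_cat // eqseq_cat // => /andP [_ /andP [/eqP Evw _]].
exact: wseq_inj Evw.
Qed.

Lemma subst_inj (u : ctx) : injective (subst u).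
Proof.
elim: u => [l r|l c IH r] v w /=; first exact: wmk_inj.
by move/wmk_inj/Dw_inj/IH.
Qed.

Lemma cat_eq_at (a b L R : seq prim) p : a ++ b = L ++ p :: R ->
  (exists R1, a = L ++ p :: R1 /\ R = R1 ++ b) \/
  (exists L2, L = a ++ L2 /\ b = L2 ++ p :: R).
Proof.
elim: a L => [|h a IH] [|h' L] //=.
- by move=> ->; right; exists [::].
- by move=> ->; right; exists (h' :: L).
- by case=> -> <-; left; exists a.
- case=> -> /IH [[R1 [-> ->]]|[L2 [-> ->]]]; [left; exists R1|right; exists L2]; by [].
Qed.

Lemma cat_eq_cat (a b c d : seq prim) : a ++ b = c ++ d ->
  (exists m, c = a ++ m /\ b = m ++ d) \/ (exists m, a = c ++ m /\ d = m ++ b).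
Proof.
elim: a c => [|h a IH] [|h' c] //=.
- by move=> ->; left; exists [::].
- by move=> ->; left; exists (h' :: c).
- by move=> <-; right; exists (h :: a).
- case=> -> /IH [[m [-> ->]]|[m [-> ->]]]; [left|right]; exists m; by [].
Qed.

Lemma occurrence_in_factor (x y z : word) (c : ctx) : wcat x y = subst c (Dw z) ->
  (exists c1, x = subst c1 (Dw z) /\ forall w, subst c w = wcat (subst c1 w) y) \/
  (exists c2, y = subst c2 (Dw z) /\ forall w, subst c w = wcat x (subst c2 w)).
Proof.
have [z0 Hz0] : exists z0, inner c (Dw z) = Dw z0 by case: c => *; eexists.
move/(congr1 (@wseq _ X)); rewrite wseq_wcat subst_inner wseq_wmk Hz0 => /cat_eq_at.
case=> [[R1 [Hx HR]]|[L2 [HL Hy]]].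
- left; exists (cset c (cL c) R1); split.
    by apply: wseq_inj; rewrite Hx subst_cset wseq_wmk Hz0.
  move=> w; apply: wseq_inj.
  by rewrite subst_cset (subst_inner c) wseq_wcat !wseq_wmk HR -!catA.
- right; exists (cset c L2 (cR c)); split.
    by apply: wseq_inj; rewrite Hy subst_cset wseq_wmk Hz0.
  move=> w; apply: wseq_inj.
  by rewrite subst_cset (subst_inner c) wseq_wcat !wseq_wmk HL -!catA.
Qed.

Lemma factorisations (x y x' y' : word) : wcat x y = wcat x' y' ->
  (x = x' /\ y = y') \/ (exists m, x' = wcat x m /\ y = wcat m y') \/
  (exists m, x = wcat x' m /\ y' = wcat m y).
Proof.
move/(congr1 (@wseq _ X)); rewrite !wseq_wcat.
case/cat_eq_cat=> [[[|h t] [E1 E2]]|[[|h t] [E1 E2]]].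
- by left; rewrite cats0 in E1; split; apply: wseq_inj.
- by right; left; exists (h, t); split; apply: wseq_inj.
- by left; rewrite cats0 in E1; split; apply: wseq_inj.
- by right; right; exists (h, t); split; apply: wseq_inj.
Qed.

Lemma inclusion_cases (z w : word) (u : ctx) : Dw z = subst u w ->
  (forall v, subst u v = v) /\ Dw z = w \/
  exists c, (forall v, subst u v = Dw (subst c v)) /\ z = subst c w.
Proof.
case: u => [[|q l] r|[|q l] c r] /=.
- case=> E1 E2; have Er : r = [::] by case: r E2 => // ? ?; case: (w.2).
  subst r; left; split; first by case=> a b /=; rewrite cats0.
  by case: w E1 E2 => a b /= <-; rewrite cats0 => <-.
- by case=> _; case: l.
- case=> E1 E2 <-; right; exists c; split => //.
  by case: z E1 E2 => a b /= -> ->; case: (subst c w).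
- by case=> _; case: l.
Qed.

End Contexts.
Arguments cI {disp X}.

Section Coefficients.
Context {disp : Order.disp_t} (X : orderType disp) (K : comNzRingType).
Local Open Scope ring_scope.
Local Notation word := (word X).
Local Notation ctx := (ctx X).
Local Notation poly := (@Defs.poly disp X K).

Lemma coef_nil w : coef ([::] : poly) w = 0.
Proof. by rewrite /coef big_nil. Qed.

Lemma coef_cons (a : K) (v : word) (f : poly) w :
  coef ((a, v) :: f) w = a * (v == w)%:R + coef f w.
Proof. by rewrite /coef big_cons /=; case: eqP; rewrite ?mulr1 ?mulr0 ?add0r. Qed.

Lemma coef_cat (f g : poly) w : coef (f ++ g) w = coef f w + coef g w.
Proof. by rewrite /coef big_cat. Qed.

Lemma coef_scale a (f : poly) w : coef (pscale a f) w = a * coef f w.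
Proof. by rewrite /coef big_map mulr_sumr. Qed.

Lemma coef_psub (f g : poly) w : coef (psub f g) w = coef f w - coef g w.
Proof. by rewrite /psub coef_cat coef_scale mulN1r. Qed.

(* By injectivity of u|_-, the coefficients of u|_f are those of f moved
   to the words u|_v, and vanish off the image of u|_-. *)
Lemma coef_psubst (u : ctx) (f : poly) v : coef (psubst u f) (subst u v) = coef f v.
Proof. by rewrite /coef big_map; apply: eq_bigl => t; rewrite /= (inj_eq (@subst_inj _ X u)). Qed.

Lemma coef_psubst_out (u : ctx) (f : poly) w :
  (forall v, subst u v <> w) -> coef (psubst u f) w = 0.
Proof. by move=> H; rewrite /coef big_map big1 // => t /eqP /H. Qed.

Lemma peq_psubst (u : ctx) (f g : poly) : peq f g -> peq (psubst u f) (psubst u g).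
Proof.
move=> H w; case: (classic (exists v, subst u v = w)) => [[v <-]|N].
  by rewrite !coef_psubst.
by rewrite !coef_psubst_out // => v E; apply: N; exists v.
Qed.

Lemma peq_psubst_id (u : ctx) (f : poly) : (forall v, subst u v = v) -> peq (psubst u f) f.
Proof. by move=> H w; have := coef_psubst u f w; rewrite H. Qed.

Lemma monic_peq (f g : poly) w : peq f g -> monic_with g w -> monic_with f w.
Proof.
move=> H [[nz lt] c1]; split; last by rewrite H.
by split=> [|v]; rewrite H //; apply: lt.
Qed.

Definition combination (l : seq (K * ctx * poly)) : poly :=
  flatten [seq pscale t.1.1 (psubst t.1.2 t.2) | t <- l].

Lemma coef_combination_nil w : coef (combination [::]) w = 0.
Proof. exact: coef_nil. Qed.

Lemma coef_combination_cons a c s l w :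
  coef (combination (((a, c), s) :: l)) w =
  a * coef (psubst c s) w + coef (combination l) w.
Proof. by rewrite /combination /= coef_cat coef_scale. Qed.

Lemma cong_mod_intro (S : poly -> Prop) w (p q : poly) l :
  (forall t, List.In t l ->
     S t.2 /\ exists sb, is_lead t.2 sb /\ wlt (subst t.1.2 sb) w) ->
  (forall v, coef p v - coef q v = coef (combination l) v) -> cong_mod S w p q.
Proof. by move=> H1 H2; exists l; split => // v; rewrite coef_psub; apply: H2. Qed.

Lemma cong_mod_ext (S : poly -> Prop) w (p q p' q' : poly) :
  (forall v, coef p v - coef q v = coef p' v - coef q' v) ->
  cong_mod S w p q -> cong_mod S w p' q'.
Proof. by move=> E [l [H1 H2]]; exists l; split => // v; rewrite coef_psub -E -coef_psub. Qed.

Lemma cong_mod_sym (S : poly -> Prop) w (p q : poly) :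
  cong_mod S w p q -> cong_mod S w q p.
Proof.
case=> l [H1 H2]; apply: (cong_mod_intro (l := [seq ((- t.1.1, t.1.2), t.2) | t <- l])).
  by move=> t /List.in_map_iff [t0 [<- /H1]].
move=> v; rewrite -opprB -coef_psub (H2 v) -/(combination l).
elim: l {H1 H2} => [|[[a c] s] l IH]; first by rewrite coef_nil oppr0.
by rewrite /= !coef_combination_cons -IH opprD mulNr.
Qed.

End Coefficients.

Section DifferentialRelations.
Context {disp : Order.disp_t} (X : orderType disp) (K : comNzRingType) (lam : K).
Local Open Scope ring_scope.
Local Notation word := (word X).
Local Notation ctx := (ctx X).
Local Notation poly := (@Defs.poly disp X K).
Local Notation S := (S_diff lam).

Arguments cl : simpl never. Arguments cr : simpl never. Arguments cI : simpl never.
Arguments cD : simpl never. Arguments wcat : simpl never. Arguments Dw : simpl never.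
Arguments subst : simpl never. Arguments Sgen : simpl never.

Lemma coef_Sgen (x y w : word) : coef (Sgen lam x y) w =
  (Dw (wcat x y) == w)%:R - (wcat (Dw x) y == w)%:R - (wcat x (Dw y) == w)%:R
  - lam * (wcat (Dw x) (Dw y) == w)%:R.
Proof. by rewrite /Sgen !coef_cons coef_nil; ring. Qed.

Lemma coef_Sgen_subst (c : ctx) (x y w : word) : coef (psubst c (Sgen lam x y)) w =
  (subst c (Dw (wcat x y)) == w)%:R - (subst c (wcat (Dw x) y) == w)%:R
  - (subst c (wcat x (Dw y)) == w)%:R - lam * (subst c (wcat (Dw x) (Dw y)) == w)%:R.
Proof. by rewrite /psubst /Sgen /= !coef_cons coef_nil; ring. Qed.

Lemma Sgen_support (x y v : word) : coef (Sgen lam x y) v != 0 ->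
  [\/ v = Dw (wcat x y), v = wcat (Dw x) y, v = wcat x (Dw y) | v = wcat (Dw x) (Dw y)].
Proof.
rewrite coef_Sgen.
case: (Dw (wcat x y) =P v) => [<- _|_]; first exact: Or41.
case: (wcat (Dw x) y =P v) => [<- _|_]; first exact: Or42.
case: (wcat x (Dw y) =P v) => [<- _|_]; first exact: Or43.
case: (wcat (Dw x) (Dw y) =P v) => [<- _|_]; first exact: Or44.
by rewrite !mulr0 !subr0 eqxx.
Qed.

Lemma coef_Sgen_lead (x y : word) : coef (Sgen lam x y) (Dw (wcat x y)) = 1.
Proof.
have ne v : descends v (Dw (wcat x y)) -> (v == Dw (wcat x y)) = false.
  by move/descends_wlt/wlt_neq/negbTE.
by rewrite coef_Sgen eqxx !ne ?mulr0 ?subr0 //;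
  [apply: descends_Dx_Dy | apply: descends_x_Dy | apply: descends_Dx_y].
Qed.

Lemma lead_Sgen (x y : word) : monic_with (Sgen lam x y) (Dw (wcat x y)).
Proof.
split; last exact: coef_Sgen_lead.
split=> [|v /Sgen_support [->|->|->|->] //]; first by rewrite coef_Sgen_lead oner_neq0.
- by rewrite eqxx.
- by move=> _; apply/descends_wlt/descends_Dx_y.
- by move=> _; apply/descends_wlt/descends_x_Dy.
- by move=> _; apply/descends_wlt/descends_Dx_Dy.
Qed.

Lemma lead_Sgen_unique (f : poly) (x y fb : word) :
  peq f (Sgen lam x y) -> is_lead f fb -> fb = Dw (wcat x y).
Proof.
move=> Hf [nz lt]; rewrite Hf in nz.
have key v : fb = v -> descends v (Dw (wcat x y)) ->
    (@degp _ X v.1 < degw (wcat x y))%N -> False.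
  move=> Efb Dv Hv; have [E _] := Dv.
  have : wlt (Dw (wcat x y)) fb.
    apply: lt; first by rewrite Hf coef_Sgen_lead oner_neq0.
    by rewrite Efb eq_sym; apply/wlt_neq/descends_wlt.
  by apply/negP; rewrite Efb; apply: Dw_not_below; rewrite // E degw_Dw.
case/Sgen_support: nz => [//|Efb|Efb|Efb]; exfalso.
- exact: key Efb (descends_Dx_y x y) (degw_lt_cat x y).
- exact: key Efb (descends_x_Dy x y) (leq_ltn_trans (degp_head_le x) (degw_lt_cat x y)).
- exact: key Efb (descends_Dx_Dy x y) (degw_lt_cat x y).
Qed.

Lemma Sgen_admissible (c : ctx) (x y w : word) :
  descends (subst c (Dw (wcat x y))) w ->
  S (Sgen lam x y) /\ exists sb, is_lead (Sgen lam x y) sb /\ wlt (subst c sb) w.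
Proof.
move=> H; split; first by exists x, y.
by exists (Dw (wcat x y)); split; [exact: (lead_Sgen x y).1 | exact: descends_wlt].
Qed.

(* Overlap  D(x m y'):  s(x, m y') - s(x m, y')  equals
     - x s(m,y') - lam D(x) s(m,y') + s(x,m) y' + lam s(x,m) D(y'). *)
Lemma overlap_composition (x m y' : word) (F G : poly) :
  peq F (Sgen lam x (wcat m y')) -> peq G (Sgen lam (wcat x m) y') ->
  cong_mod S (Dw (wcat x (wcat m y'))) (psub F G) (pzero X K).
Proof.
move=> HF HG.
apply: (cong_mod_intro (l := [:: ((-1, cl x cI), Sgen lam m y');
  ((- lam, cl (Dw x) cI), Sgen lam m y'); ((1, cr cI y'), Sgen lam x m);
  ((lam, cr cI (Dw y')), Sgen lam x m)])).
- move=> t /=; case=> [<-|[<-|[<-|[<-|[]]]]]; apply: Sgen_admissible;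
    rewrite ?subst_cl ?subst_cr subst_cI.
  + exact: descends_x_Dy.
  + exact: descends_Dx_Dy.
  + by rewrite wcatA; apply: descends_Dx_y.
  + by rewrite wcatA; apply: descends_Dx_Dy.
- move=> v; rewrite coef_nil subr0 coef_psub HF HG !coef_combination_cons
    coef_combination_nil !coef_Sgen !coef_Sgen_subst !subst_cl !subst_cr !subst_cI !wcatA.
  ring.
Qed.

(* Nested case, D(x'y') inside x = c1|_{D(x'y')}: the composition is
     - D(c1|s) y - c1|s D(y) - lam D(c1|s) D(y)
     + s(c1|D(x')y', y) + s(c1|x'D(y'), y) + lam s(c1|D(x')D(y'), y)
   with s = s(x',y'); every leading word descends to D(xy). *)
Lemma nested_left_composition (x y x' y' : word) (c1 u : ctx) (F G : poly) :
  x = subst c1 (Dw (wcat x' y')) ->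
  (forall w, subst u w = Dw (wcat (subst c1 w) y)) ->
  peq F (Sgen lam x y) -> peq G (Sgen lam x' y') ->
  cong_mod S (Dw (wcat x y)) (psub F (psubst u G)) (pzero X K).
Proof.
move=> Hx Hu HF HG.
have inside v : descends v (Dw (wcat x' y')) ->
    descends (Dw (wcat (subst c1 v) y)) (Dw (wcat x y)).
  by move/(descends_subst (cD (cr c1 y))); rewrite !subst_cD !subst_cr -Hx.
apply: (cong_mod_intro (l := [:: ((-1, cr (cD c1) y), Sgen lam x' y');
  ((-1, cr c1 (Dw y)), Sgen lam x' y'); ((- lam, cr (cD c1) (Dw y)), Sgen lam x' y');
  ((1, cI), Sgen lam (subst c1 (wcat (Dw x') y')) y);
  ((1, cI), Sgen lam (subst c1 (wcat x' (Dw y'))) y);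
  ((lam, cI), Sgen lam (subst c1 (wcat (Dw x') (Dw y'))) y)])).
- move=> t /=; case=> [<-|[<-|[<-|[<-|[<-|[<-|[]]]]]]]; apply: Sgen_admissible;
    rewrite ?subst_cr ?subst_cD ?subst_cI -?Hx.
  + exact: descends_Dx_y.
  + exact: descends_x_Dy.
  + exact: descends_Dx_Dy.
  + exact/inside/descends_Dx_y.
  + exact/inside/descends_x_Dy.
  + exact/inside/descends_Dx_Dy.
- move=> v; rewrite coef_nil subr0 coef_psub HF (peq_psubst u HG)
    !coef_combination_cons coef_combination_nil !coef_Sgen !coef_Sgen_subst !Hu
    !subst_cr !subst_cD !subst_cI -Hx.
  ring.
Qed.

Lemma nested_right_composition (x y x' y' : word) (c2 u : ctx) (F G : poly) :
  y = subst c2 (Dw (wcat x' y')) ->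
  (forall w, subst u w = Dw (wcat x (subst c2 w))) ->
  peq F (Sgen lam x y) -> peq G (Sgen lam x' y') ->
  cong_mod S (Dw (wcat x y)) (psub F (psubst u G)) (pzero X K).
Proof.
move=> Hy Hu HF HG.
have inside v : descends v (Dw (wcat x' y')) ->
    descends (Dw (wcat x (subst c2 v))) (Dw (wcat x y)).
  by move/(descends_subst (cD (cl x c2))); rewrite !subst_cD !subst_cl -Hy.
apply: (cong_mod_intro (l := [:: ((-1, cl (Dw x) c2), Sgen lam x' y');
  ((-1, cl x (cD c2)), Sgen lam x' y'); ((- lam, cl (Dw x) (cD c2)), Sgen lam x' y');
  ((1, cI), Sgen lam x (subst c2 (wcat (Dw x') y')));
  ((1, cI), Sgen lam x (subst c2 (wcat x' (Dw y'))));
  ((lam, cI), Sgen lam x (subst c2 (wcat (Dw x') (Dw y'))))])).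
- move=> t /=; case=> [<-|[<-|[<-|[<-|[<-|[<-|[]]]]]]]; apply: Sgen_admissible;
    rewrite ?subst_cl ?subst_cD ?subst_cI -?Hy.
  + exact: descends_Dx_y.
  + exact: descends_x_Dy.
  + exact: descends_Dx_Dy.
  + exact/inside/descends_Dx_y.
  + exact/inside/descends_x_Dy.
  + exact/inside/descends_Dx_Dy.
- move=> v; rewrite coef_nil subr0 coef_psub HF (peq_psubst u HG)
    !coef_combination_cons coef_combination_nil !coef_Sgen !coef_Sgen_subst !Hu
    !subst_cl !subst_cD !subst_cI -Hy.
  ring.
Qed.

Lemma inclusion_composition (x y x' y' : word) (u : ctx) (f g : poly) :
  peq f (Sgen lam x y) -> peq g (Sgen lam x' y') ->
  Dw (wcat x y) = subst u (Dw (wcat x' y')) ->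
  cong_mod S (Dw (wcat x y)) (psub f (psubst u g)) (pzero X K).
Proof.
move=> Hf Hg /inclusion_cases [[Hid /Dw_inj Exy] | [c [Hu /occurrence_in_factor Ez]]].
- apply: (cong_mod_ext (p := psub f g) (q := pzero X K)).
    by move=> v; rewrite !coef_psub (peq_psubst_id g Hid v).
  case: (factorisations Exy) => [[Ex Ey]|[[m [Ex Ey]]|[m [Ex Ey]]]]; subst.
  + apply: (cong_mod_intro (l := [::])) => // v.
    by rewrite !coef_nil coef_psub Hf Hg subrr subr0.
  + exact: overlap_composition.
  + apply: (cong_mod_ext (p := pzero X K) (q := psub g f)).
      by move=> v; rewrite !coef_psub coef_nil sub0r opprB subr0.
    by apply: cong_mod_sym; rewrite -wcatA; apply: overlap_composition.
- case: Ez => [[c1 [Hx Hc]]|[c2 [Hy Hc]]].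
  + by apply: (nested_left_composition Hx _ Hf Hg) => w; rewrite Hu Hc.
  + by apply: (nested_right_composition Hy _ Hf Hg) => w; rewrite Hu Hc.
Qed.

End DifferentialRelations.

(* A word with a prime left factor and a nonempty rest has bre >= 2, so two
   prime leading words admit no intersection composition. *)
Lemma no_intersection {disp : Order.disp_t} (X : orderType disp) (z z' a : word X) :
  ~~ (bre (wcat (Dw z) a) < bre (Dw z) + bre (Dw z'))%N.
Proof. by []. Qed.

Theorem theorem5p3 (disp : Order.disp_t) (X : orderType disp)
  (wfX : well_founded (fun a b : X => (a < b)%O))
  (K : comNzRingType) (lam : K) :
  GSbasis (S_diff (X := X) lam).
Proof.
split=> [s [x [y Hs]] | f g fb gb [x [y Hf]] [x' [y' Hg]] [Lf _] [Lg _]].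
  by exists (Dw (wcat x y)); apply: monic_peq Hs (lead_Sgen lam x y).
rewrite (lead_Sgen_unique Hf Lf) (lead_Sgen_unique Hg Lg); split.
- by move=> a b w -> _; rewrite (negbTE (no_intersection _ _ _)).
- by move=> u E; apply: inclusion_composition.
Qed.
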